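(* Let $q$ be a prime power and $N,m,k,r$ positive integers with $m\le N$, $k\le m$, $r<k$. Let $\mathcal{C}\subseteq\mathbb{F}_{q^N}^m$ be an $[N\times m,\,Nk,\,m-k+1]$ Gabidulin MRD code, and assume either (Case 1) $m\equiv 0\pmod r$, or (Case 2) $m\equiv k\equiv j\pmod r$ for some $1\le j<r$. Partition the $m$ coordinates into $\lfloor m/r\rfloor$ disjoint groups $G_i$ of size $r$, together with (in Case 2 only) one additional group $\widehat{G}$ of size $j$. Define $C^{\mathrm{loc}}$ as the set of vectors obtained from each $\mathbf{c}\in\mathcal{C}$ by appending, for each group $G_i$, a parity symbol $p_i=\sum_{s\in G_i}c_s$, and (in Case 2) a parity symbol $\widehat{p}=\sum_{s\in\widehat{G}}c_s$. Let $n$ be the length of $C^{\mathrm{loc}}$ (so $n=m+m/r$ in Case 1 and $n=m+\lceil m/r\rceil$ in Case 2). Then $C^{\mathrm{loc}}$ is an $[n,k,d_{\min}]$ code over $\mathbb{F}_{q^N}$ with minimum Hamming distance $d_{\min}=n-k+2-\lceil k/r\rceil$.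
   Context: The Gabidulin code $\mathcal{C}$ with these parameters consists of the vectors $[f(g_1),\dots,f(g_m)]$, where $g_1,\dots,g_m\in\mathbb{F}_{q^N}$ are fixed and linearly independent over $\mathbb{F}_q$, and $f$ ranges over linearized polynomials $f(x)=\sum_{i=0}^{k-1}a_ix^{q^i}$ with $a_i\in\mathbb{F}_{q^N}$; its minimum rank distance is $m-k+1$. The code $C^{\mathrm{loc}}$ is regarded as a linear code over $\mathbb{F}_{q^N}$ with the Hamming metric. *)

From HB Require Import structures.
From mathcomp Require Import all_boot all_order all_algebra all_field.
Set Implicit Arguments. Unset Strict Implicit. Unset Printing Implicit Defensive.
Import GRing.Theory.
Local Open Scope ring_scope.

Definition ceil_div (a b : nat) : nat := ((a + b.-1) %/ b)%N.

Definition hwt (L : fieldType) (n : nat) (v : 'rV[L]_n) : nat :=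
  #|[set i : 'I_n | v ord0 i != 0]|.

(* Codeword of the Gabidulin code: evaluation of the linearized polynomial
   f(x) = sum_{i<k} a_i x^{q^i} at the points g_1, ..., g_m. *)
Definition gab_word (L : fieldType) (q m k : nat) (g : 'I_m -> L)
  (a : 'I_k -> L) : 'rV[L]_m :=
  \row_(j < m) \sum_(i < k) a i * g j ^+ (q ^ i).

Definition gabidulin_code (L : fieldType) (q m k : nat) (g : 'I_m -> L)
  (c : 'rV[L]_m) : Prop := exists a : 'I_k -> L, c = @gab_word L q m k g a.

(* Append to c one parity symbol per group; grp assigns each coordinate
   to its group (groups indexed by 'I_t). *)
Definition loc_extend (L : fieldType) (m t : nat) (grp : 'I_m -> 'I_t)
  (c : 'rV[L]_m) : 'rV[L]_(m + t) :=
  row_mx c (\row_(i < t) \sum_(s < m | grp s == i) c ord0 s).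

Definition loc_code (L : fieldType) (q m k t : nat) (g : 'I_m -> L)
  (grp : 'I_m -> 'I_t) (v : 'rV[L]_(m + t)) : Prop :=
  exists c, @gabidulin_code L q m k g c /\ v = loc_extend grp c.

Definition min_hamming_distance (L : fieldType) (n : nat)
  (C : 'rV[L]_n -> Prop) (d : nat) : Prop :=
  (exists2 c, C c & (c != 0) && (hwt c == d)) /\
  (forall c, C c -> c != 0 -> (d <= hwt c)%N).

From HB Require Import structures.
From mathcomp Require Import all_boot all_order all_algebra all_field.
From mathcomp Require Import zify.
Set Implicit Arguments. Unset Strict Implicit. Unset Printing Implicit Defensive.
Import GRing.Theory.
Local Open Scope ring_scope.

(* A codeword is the row of values of a linearized polynomial
   f(x) = sum_(i < k) a_i x^(q^i) at the points g_s, followed by its values at the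
   block sums w_i = sum_(s in G_i) g_s: by F-linearity of f the parity symbol of G_i
   is f(w_i).  A nonzero f has at most q^(k-1) roots, so an F-independent family of
   roots of f has fewer than k members.  If Z is the set of zero coordinates among
   the first m and Z_p the set of zero parity symbols, the g_s (s in Z) together with
   the w_i (i in Z_p, G_i not contained in Z) are such a family, whence
   |Z| + |Z_p| - #{i | G_i \subset Z} < k.  The blocks contained in Z cover at most
   k - 1 coordinates and all but one of them have size r, so there are at most
   (k - 1) %/ r of them; this gives weight >= n - k + 1 - (k - 1) %/ r, which is
   n - k + 2 - ceil(k / r).  Equality is attained by an f vanishing on k - 1 points
   that fill (k - 1) %/ r complete blocks of size r. *)

Lemma row_eta (R : Type) n (u : 'rV[R]_n) : \row_i u ord0 i = u.
Proof. by apply/rowP => i; rewrite mxE. Qed.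

Lemma card_split_ord n1 n2 (P : pred 'I_(n1 + n2)) :
  #|[set i | P i]| = (#|[set i | P (lshift n2 i)]| + #|[set i | P (rshift n1 i)]|)%N.
Proof. by rewrite -!sum1dep_card big_split_ord. Qed.

Lemma exists_subset_card (T : finType) (A B : {set T}) n :
  A \subset B -> (#|A| <= n <= #|B|)%N ->
  exists C : {set T}, [/\ A \subset C, C \subset B & #|C| = n].
Proof.
move=> sAB; elim: n => [|n IHn] /andP [le_An le_nB].
  by exists A; split => //; apply/eqP; rewrite -leqn0.
have [lt_An | eq_An] := ltnP #|A| n.+1; last first.
  by exists A; split => //; apply/eqP; rewrite eqn_leq le_An.
have [C [sAC sCB card_C]] := IHn (ltac:(apply/andP; split; lia)).
have /subsetPn [x xB xC] : ~~ (B \subset C).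
  by apply: contraTN le_nB => /subset_leq_card; rewrite card_C -ltnNge.
exists (x |: C); split; first exact: subset_trans sAC (subsetUr _ _).
  by rewrite subUset sub1set xB.
by rewrite cardsU1 xC card_C.
Qed.

Lemma leq_divn_of_mulr x y d r :
  (d + y %% r < r)%N -> (x * r <= y + d)%N -> (x <= y %/ r)%N.
Proof.
move=> lt_dr le_xr; have r_gt0 : (0 < r)%N by lia.
rewrite -ltnS -(ltn_pmul2r r_gt0) mulSn; move: le_xr lt_dr.
rewrite {1}(divn_eq y r); move: (y %/ r * r)%N (y %% r)%N => u v; lia.
Qed.

Lemma ceil_divE k r : (0 < k)%N -> (0 < r)%N -> ceil_div k r = (k.-1 %/ r).+1.
Proof.
move=> k_gt0 r_gt0; rewrite /ceil_div (_ : k + r.-1 = k.-1 + r)%N; last by lia.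
by rewrite divnDr // divnn r_gt0 addn1.
Qed.

Section LinearizedPolynomials.
Variables (F : finFieldType) (L : fieldExtType F).
Local Notation q := #|F|.

Lemma exprD_card_pow e (x y : L) :
  (x + y) ^+ (q ^ e) = x ^+ (q ^ e) + y ^+ (q ^ e).
Proof.
have [p p_pr pcharFp] := finPcharP F.
apply: exprDn_pchar; rewrite (card_pprimeChar pcharFp) -expnM pnatX.
by rewrite (eq_pnat _ (pchar_lalg L)) pnatE ?pcharFp.
Qed.

Lemma exprZ_card_pow e (c : F) (x : L) :
  (c *: x) ^+ (q ^ e) = c *: x ^+ (q ^ e).
Proof.
rewrite exprZn; congr (_ *: _).
by elim: e => [|e IHe]; rewrite ?expr1 // expnSr exprM IHe expf_card.
Qed.

Definition lpoly k (a : 'I_k -> L) (x : L) : L := \sum_(i < k) a i * x ^+ (q ^ i).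

Fact lpoly_is_linear k (a : 'I_k -> L) : linear (lpoly a).
Proof.
move=> c x y; rewrite /lpoly scaler_sumr -big_split; apply: eq_bigr => i _.
by rewrite exprD_card_pow exprZ_card_pow mulrDr scalerAr.
Qed.

HB.instance Definition _ k (a : 'I_k -> L) :=
  GRing.isLinear.Build F L L *:%R (lpoly a) (lpoly_is_linear a).

Lemma size_lpoly_roots k (a : 'I_k -> L) (s : seq L) :
  (exists i, a i != 0) -> uniq s -> all (fun x => lpoly a x == 0) s ->
  (size s <= q ^ k.-1)%N.
Proof.
move=> [i0 ai0] s_uniq s_roots; have q_gt1 := finNzRing_gt1 F.
pose P : {poly L} := \sum_(i < k) a i *: 'X^(q ^ i).
have coefP j : P`_j = \sum_(i < k) a i * (j == (q ^ i)%N)%:R.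
  by rewrite coef_sum; apply: eq_bigr => i _; rewrite coefZ coefXn.
have P_neq0 : P != 0.
  apply: contraNneq ai0 => P0; have := coefP (q ^ i0)%N.
  rewrite P0 coef0 (bigD1 i0) //= eqxx mulr1 big1 => [|i ne_i].
    by rewrite addr0 => <-.
  by rewrite eqn_exp2l // eq_sym (inj_eq val_inj) (negPf ne_i) mulr0.
have size_P : (size P <= (q ^ k.-1).+1)%N.
  apply/leq_sizeP => j lt_j; rewrite coefP big1 // => i _.
  case: eqP => [j_eq|]; last by rewrite mulr0.
  by move: lt_j; rewrite j_eq ltn_exp2l //; have := ltn_ord i; lia.
have P_roots : all (root P) s.
  apply: sub_all s_roots => x; rewrite /root horner_sum.
  by under eq_bigr do rewrite hornerZ hornerXn.
by rewrite -ltnS (leq_trans (max_poly_roots P_neq0 P_roots s_uniq)).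
Qed.

Definition lin_indep (I : finType) (v : I -> L) :=
  forall c : I -> F, \sum_i c i *: v i = 0 -> forall i, c i = 0.

Lemma lin_indep_free m (g : 'I_m -> L) :
  free [seq g i | i : 'I_m] -> lin_indep g.
Proof.
move=> g_free c c0 s; have g_free' : free [tuple g i | i < m].
  by rewrite /= -val_ord_tuple.
apply: (freeP g_free') => //; rewrite -[RHS]c0; apply: eq_bigr => i _.
by rewrite -tnth_nth tnth_mktuple.
Qed.

Lemma lin_indep_roots_card k (a : 'I_k -> L) (I : finType) (v : I -> L) :
  (exists i, a i != 0) -> lin_indep v -> (forall i, lpoly a (v i) = 0) ->
  (#|I| < k)%N.
Proof.
move=> a_neq0 v_indep v_roots; have q_gt1 := finNzRing_gt1 F.
pose span (c : {ffun I -> F}) := \sum_i c i *: v i.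
have span_inj : injective span.
  move=> c1 c2 eq_span; apply/ffunP => i; apply/eqP; rewrite -subr_eq0; apply/eqP.
  apply: (v_indep (fun i => c1 i - c2 i)).
  by under eq_bigr do rewrite scalerBl; rewrite sumrB -/(span c1) eq_span subrr.
have span_roots : all (fun x => lpoly a x == 0) (map span (enum {ffun I -> F})).
  apply/allP => _ /mapP [c _ ->]; rewrite linear_sum big1 // => i _.
  by rewrite linearZ /= v_roots scaler0.
have := size_lpoly_roots a_neq0 _ span_roots.
rewrite map_inj_uniq ?enum_uniq // size_map -cardE card_ffun => /(_ isT).
rewrite leq_exp2l //; case: a_neq0 => [[i lt_ik] _] /=; lia.
Qed.

Lemma exists_lpoly_roots k (I : finType) (v : I -> L) : (#|I| < k)%N ->
  exists2 a : 'I_k -> L, exists i, a i != 0 & forall j, lpoly a (v j) = 0.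
Proof.
move=> lt_Ik.
pose A : 'M[L]_(k, #|I|) := \matrix_(i, c) v (enum_val c) ^+ (q ^ i).
have : kermx A != 0.
  by rewrite kermx_eq0 /row_free neq_ltn (leq_ltn_trans (rank_leq_col A)).
case/rowV0Pn => u /sub_kermxP uA u_neq0; exists (fun i => u ord0 i).
  apply/existsP; apply: contraNT u_neq0 => /existsPn u0.
  by apply/eqP/rowP => i; rewrite mxE; apply/eqP/negPn/u0.
move=> j; have := congr1 (fun w : 'rV[L]_#|I| => w ord0 (enum_rank j)) uA.
rewrite !mxE => <-; apply: eq_bigr => i _.
by rewrite mxE enum_rankK.
Qed.

End LinearizedPolynomials.

Section LocallyRepairableGabidulin.
Variables (F : finFieldType) (L : fieldExtType F) (m k t : nat).
Variables (g : 'I_m -> L) (grp : 'I_m -> 'I_t).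
Local Notation q := #|F|.

Definition grp_block i := [set s | grp s == i].
Definition grp_sum i := \sum_(s | grp s == i) g s.

Lemma card_grp_preimage (A : {set 'I_t}) :
  #|[set s | grp s \in A]| = (\sum_(i in A) #|grp_block i|)%N.
Proof.
rewrite -sum1_card (partition_big grp (mem A)) => [|s]; last by rewrite inE.
apply: eq_bigr => i iA; rewrite -sum1_card; apply: eq_bigl => s.
by rewrite !inE andb_idl // => /eqP ->.
Qed.

Definition block_family (S : {set 'I_m}) (B : {set 'I_t})
  (x : {s | s \in S} + {i | i \in B}) : L :=
  match x with inl s => g (val s) | inr i => grp_sum (val i) end.
Arguments block_family : clear implicits.

Lemma lin_indep_block_family (S : {set 'I_m}) (B : {set 'I_t}) :
  lin_indep g ->
  {in B, forall i, ~~ (grp_block i \subset S)} -> lin_indep (block_family S B).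
Proof.
move=> g_indep B_out c c_sum0.
pose cS s := if insub s is Some x then c (inl x) else 0.
pose cB i := if insub i is Some y then c (inr y) else 0.
have coef_eq0 : forall s, cS s + cB (grp s) = 0.
  apply: g_indep; rewrite -[RHS]c_sum0 big_sumType /=.
  under eq_bigr do rewrite scalerDl; rewrite big_split /=; congr (_ + _).
    rewrite (bigID (mem S)) /= [X in _ + X]big1 ?addr0 => [|s s_out]; last first.
      by rewrite /cS insubF ?scale0r //; apply: negbTE.
    rewrite big_sub; apply: eq_bigr => x _.
    by rewrite /cS valK.
  rewrite (partition_big grp predT) //=.
  rewrite (bigID (mem B)) /= [X in _ + X]big1 ?addr0 => [|i i_out]; last first.
    by rewrite big1 // => s /eqP ->; rewrite /cB insubF ?scale0r //; apply: negbTE.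
  rewrite big_sub; apply: eq_bigr => y _.
  by rewrite /grp_sum scaler_sumr; apply: eq_bigr => s /eqP ->; rewrite /cB valK.
have cB_eq0 (y : {i | i \in B}) : c (inr y) = 0.
  have /subsetPn [s s_in s_out] := B_out _ (valP y).
  have := coef_eq0 s; rewrite /cS /cB insubF ?add0r; last exact: negbTE.
  by move: s_in; rewrite inE => /eqP ->; rewrite valK.
case=> [x|y]; last exact: cB_eq0.
have := coef_eq0 (val x); rewrite /cS /cB valK.
by case: insubP => [y _ _|_]; rewrite ?cB_eq0 addr0.
Qed.

Definition encode (a : 'I_k -> L) : 'rV[L]_(m + t) :=
  loc_extend grp (gab_word q g a).

Lemma encode_lshift a s : encode a ord0 (lshift t s) = lpoly a (g s).
Proof. by rewrite /encode /loc_extend row_mxEl mxE. Qed.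

Lemma encode_rshift a i : encode a ord0 (rshift m i) = lpoly a (grp_sum i).
Proof.
rewrite /encode /loc_extend row_mxEr mxE linear_sum.
by apply: eq_bigr => s _; rewrite mxE.
Qed.

Definition zero_gab (a : 'I_k -> L) := [set s | lpoly a (g s) == 0].
Definition zero_parity (a : 'I_k -> L) := [set i | lpoly a (grp_sum i) == 0].
Definition zero_blocks (a : 'I_k -> L) := [set i | grp_block i \subset zero_gab a].

Lemma hwt_encode a :
  hwt (encode a) = ((m - #|zero_gab a|) + (t - #|zero_parity a|))%N.
Proof.
have gab_nz : [set s | encode a ord0 (lshift t s) != 0] = ~: zero_gab a.
  by apply/setP => s; rewrite !inE encode_lshift.
have parity_nz : [set i | encode a ord0 (rshift m i) != 0] = ~: zero_parity a.
  by apply/setP => i; rewrite !inE encode_rshift.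
rewrite /hwt card_split_ord gab_nz parity_nz.
have := cardsC (zero_gab a); have := cardsC (zero_parity a); rewrite !card_ord; lia.
Qed.

Lemma zero_blocks_sub a : zero_blocks a \subset zero_parity a.
Proof.
apply/subsetP => i; rewrite !inE => /subsetP blk_zero.
rewrite linear_sum big1 // => s s_i; apply/eqP.
by have := blk_zero s; rewrite !inE; apply.
Qed.

Lemma sum_card_zero_blocks a :
  (\sum_(i in zero_blocks a) #|grp_block i| <= #|zero_gab a|)%N.
Proof.
rewrite -card_grp_preimage; apply/subset_leq_card/subsetP => s.
by rewrite /zero_blocks /grp_block !inE => /subsetP/(_ s); rewrite !inE eqxx; apply.
Qed.

Lemma loc_codeE v : @loc_code L q m k t g grp v <-> exists a, v = encode a.
Proof.
split; first by case=> c [[a ->] ->]; exists a.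
by case=> a ->; exists (gab_word q g a); split => //; exists a.
Qed.

Definition gen_mx : 'M[L]_(k, m + t) :=
  row_mx (\matrix_(i, s) g s ^+ (q ^ i)) (\matrix_(i, l) grp_sum l ^+ (q ^ i)).

Lemma mul_row_gen_mx (a : 'I_k -> L) : (\row_i a i) *m gen_mx = encode a.
Proof.
rewrite mul_mx_row /encode /loc_extend; congr row_mx; apply/rowP => j; rewrite !mxE.
  by apply: eq_bigr => i _; rewrite !mxE.
transitivity (lpoly a (grp_sum j)); first by apply: eq_bigr => i _; rewrite !mxE.
by rewrite linear_sum; apply: eq_bigr => s _; rewrite mxE.
Qed.

Lemma encode_neq0 (a : 'I_k -> L) : encode a != 0 -> exists i, a i != 0.
Proof.
move=> enc_neq0; apply/existsP; apply: contraNT enc_neq0 => /existsPn a0.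
rewrite -mul_row_gen_mx; suff -> : \row_i a i = 0 by rewrite mul0mx.
by apply/rowP => i; rewrite !mxE; apply/eqP/negPn/a0.
Qed.

Definition code_space : {vspace 'rV[L]_(m + t)} :=
  (linfun (mulmxr gen_mx) @: fullv)%VS.

Lemma code_spaceP v : reflect (exists a, v = encode a) (v \in code_space).
Proof.
apply: (iffP memv_imgP) => [[u _ ->] | [a ->]].
  by exists (fun i => u ord0 i); rewrite lfunE /= -mul_row_gen_mx row_eta.
by exists (\row_i a i); rewrite ?memvf // lfunE /= mul_row_gen_mx.
Qed.

Hypothesis g_indep : lin_indep g.

Lemma card_zeros_lt a : (exists i, a i != 0) ->
  (#|zero_gab a| + #|zero_parity a :\: zero_blocks a| < k)%N.
Proof.
move=> a_neq0; set NZ := zero_parity a :\: zero_blocks a.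
have indep : lin_indep (block_family (zero_gab a) NZ).
  apply: lin_indep_block_family => // i.
  by rewrite /NZ /zero_blocks !inE => /andP [].
have roots x : lpoly a (block_family (zero_gab a) NZ x) = 0.
  case: x => [[s] | [i]] /=; first by rewrite inE => /eqP.
  by rewrite /NZ /zero_parity !inE => /andP [_ /eqP].
by have := lin_indep_roots_card a_neq0 indep roots; rewrite card_sum !card_sig.
Qed.

Lemma encode_eq0 a : (k <= m)%N -> encode a = 0 -> forall i, a i = 0.
Proof.
move=> le_km a0 i; apply/eqP/negPn/negP => ai_neq0.
have := card_zeros_lt (ex_intro _ i ai_neq0).
suff -> : zero_gab a = setT by rewrite cardsT card_ord; lia.
by apply/setP => s; rewrite !inE -encode_lshift a0 mxE eqxx.
Qed.

Lemma dim_code_space : (k <= m)%N -> \dim code_space = k.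
Proof.
move=> le_km; rewrite limg_dim_eq ?dimvf ?dim_matrix ?mul1r //.
rewrite capfv; apply/eqP/lker0P => u1 u2; rewrite !lfunE /= => eq_u.
apply/eqP; rewrite -subr_eq0; apply/eqP/rowP => i; rewrite [RHS]mxE.
apply: (encode_eq0 (a := fun i => (u1 - u2) ord0 i) le_km).
rewrite -mul_row_gen_mx row_eta.
by rewrite mulmxBl eq_u subrr.
Qed.

End LocallyRepairableGabidulin.

Section BlockSizes.
Variables (m k t r : nat) (grp : 'I_m -> 'I_t).
Local Notation blk_size i := #|grp_block grp i|.

(* [d] bounds the total shortfall of the block sizes below [r]; [B] supplies the
   blocks of size exactly [r] filled by the zeros of a minimum-weight word. *)
Definition block_sizes_spec (d : nat) (B : {set 'I_t}) :=
  [/\ (d + k.-1 %% r < r)%N,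
      forall A : {set 'I_t}, (#|A| * r <= \sum_(i in A) blk_size i + d)%N,
      {in B, forall i, blk_size i = r} &
      (k.-1 %/ r <= #|B|)%N].

Lemma block_sizes_divisible : (0 < r)%N -> (k <= m)%N -> t = (m %/ r)%N ->
  (forall i, blk_size i = r) -> block_sizes_spec 0 setT.
Proof.
move=> r_gt0 le_km t_eq size_r; split => [|A|i _|]; rewrite ?ltn_pmod //.
  by rewrite addn0 -sum_nat_const; apply: leq_sum => i _; rewrite size_r.
by rewrite cardsT card_ord t_eq leq_div2r //; lia.
Qed.

Lemma block_sizes_residue j i0 : (0 < j)%N -> (j < r)%N -> (k %% r = j)%N ->
  (k <= m)%N -> t = (m %/ r).+1 ->
  blk_size i0 = j -> (forall i, i != i0 -> blk_size i = r) ->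
  block_sizes_spec (r - j) [set~ i0].
Proof.
move=> j_gt0 lt_jr k_mod le_km t_eq size_i0 size_r.
have k_eq : k = (k %/ r * r + j)%N by rewrite {1}(divn_eq k r) k_mod.
have k_pred : k.-1 = (k %/ r * r + j.-1)%N.
  by move: k_eq; move: (k %/ r * r)%N => X; lia.
have r_gt0 : (0 < r)%N by lia.
have lt_j1r : (j.-1 < r)%N by lia.
have div_pred : (k.-1 %/ r = k %/ r)%N.
  by rewrite k_pred divnMDl // (divn_small lt_j1r) addn0.
have mod_pred : (k.-1 %% r = j.-1)%N by rewrite k_pred modnMDl (modn_small lt_j1r).
split => [|A|i|].
- by rewrite mod_pred; lia.
- rewrite -sum_nat_const.
  apply: (@leq_trans (\sum_(i in A) (blk_size i + (i == i0) * (r - j)))%N).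
    by apply: leq_sum => i _; case: eqVneq => [->|/size_r ->]; rewrite ?size_i0; lia.
  rewrite big_split leq_add2l /=; case: (boolP (i0 \in A)) => [i0A|i0A].
    by rewrite (bigD1 i0) //= eqxx mul1n big1 ?addn0 // => i /andP [_ /negPf ->].
  by rewrite big1 // => i iA; case: eqVneq iA i0A => // -> ->.
- by rewrite in_setC1; apply: size_r.
- by rewrite cardsC1 card_ord t_eq div_pred leq_div2r.
Qed.

End BlockSizes.

Section MinimumWeight.
Variables (F : finFieldType) (L : fieldExtType F) (m k t r d : nat).
Variables (g : 'I_m -> L) (grp : 'I_m -> 'I_t) (B : {set 'I_t}).
Hypothesis g_indep : lin_indep g.
Hypothesis blocks : block_sizes_spec k r grp d B.

Lemma card_zero_blocks_le (a : 'I_k -> L) : (exists i, a i != 0) ->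
  (#|zero_blocks g grp a| <= k.-1 %/ r)%N.
Proof.
move=> a_neq0; have [lt_dr sum_ge _ _] := blocks.
apply: (leq_divn_of_mulr lt_dr); apply: leq_trans (sum_ge _) _.
rewrite leq_add2r; apply: leq_trans (sum_card_zero_blocks g grp a) _.
have := card_zeros_lt grp g_indep a_neq0; lia.
Qed.

Lemma hwt_encode_ge (a : 'I_k -> L) : (k <= m)%N -> (exists i, a i != 0) ->
  (m + t - k + 2 - (k.-1 %/ r).+1 <= hwt (encode g grp a))%N.
Proof.
move=> le_km a_neq0; rewrite hwt_encode.
have := card_zeros_lt grp g_indep a_neq0; have := card_zero_blocks_le a_neq0.
rewrite cardsD (setIidPr (zero_blocks_sub g grp a)).
have := subset_leq_card (zero_blocks_sub g grp a).
have := max_card (zero_gab g a); have := max_card (zero_parity g grp a).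
rewrite !card_ord; lia.
Qed.

Lemma exists_encode_hwt_le : (0 < k)%N -> (k <= m)%N ->
  exists2 a : 'I_k -> L, exists i, a i != 0 &
    (hwt (encode g grp a) <= m + t - k + 2 - (k.-1 %/ r).+1)%N.
Proof.
move=> k_gt0 le_km; have [_ _ size_r le_bB] := blocks; set b := (k.-1 %/ r)%N.
have [C [_ sCB card_C]] := exists_subset_card (sub0set B) (n := b)
  (ltac:(by rewrite cards0)).
pose U := [set s | grp s \in C].
have card_U : #|U| = (b * r)%N.
  rewrite card_grp_preimage -card_C -sum_nat_const; apply: eq_bigr => i iC.
  exact/size_r/(subsetP sCB).
have [T [sUT _ card_T]] := exists_subset_card (subsetT U) (n := k.-1)
  (ltac:(rewrite card_U cardsT card_ord leq_divM; lia)).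
have lt_Tk : (#|{: {s | s \in T}}| < k)%N.
  by rewrite card_sig; change (#|T| < k)%N; rewrite card_T; lia.
have [a a_neq0 a_roots] :=
  exists_lpoly_roots (fun s : {s | s \in T} => g (val s)) lt_Tk.
have T_zero s : s \in T -> lpoly a (g s) = 0.
  by move=> sT; apply: (a_roots (Sub s sT)).
exists a => //; rewrite hwt_encode.
have : (k.-1 <= #|zero_gab g a|)%N.
  by rewrite -card_T; apply/subset_leq_card/subsetP => s /T_zero; rewrite inE => ->.
have : (b <= #|zero_parity g grp a|)%N.
  rewrite -card_C; apply/subset_leq_card/subsetP => i iC.
  rewrite inE linear_sum big1 // => s /eqP s_i; apply: T_zero.
  by apply: (subsetP sUT); rewrite inE s_i.
have : (b <= t)%N.
  by apply: leq_trans le_bB _; rewrite -[t in (_ <= t)%N]card_ord max_card.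
lia.
Qed.

End MinimumWeight.

Unset Implicit Arguments.
Set Strict Implicit.

Theorem theorem2 (F : finFieldType) (L : fieldExtType F)
  (N m k r t : nat) (g : 'I_m -> L) (grp : 'I_m -> 'I_t) :
  \dim {: L}%VS = N ->
  (0 < N)%N -> (0 < m)%N -> (0 < k)%N -> (0 < r)%N ->
  (m <= N)%N -> (k <= m)%N -> (r < k)%N ->
  free [seq g i | i : 'I_m] ->
  (* Case 1 *)
  ((r %| m)%N /\ t = (m %/ r)%N /\
     (forall i : 'I_t, #|[set s | grp s == i]| = r))
  \/
  (* Case 2 *)
  (exists j : nat, [/\ (0 < j)%N, (j < r)%N, (m %% r = j)%N, (k %% r = j)%N
     & t = (m %/ r).+1] /\
     exists i0 : 'I_t, #|[set s | grp s == i0]| = j /\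
       forall i : 'I_t, i != i0 -> #|[set s | grp s == i]| = r) ->
  let n := (m + t)%N in
  exists V : {vspace 'rV[L]_(m + t)},
    (forall v, v \in V <-> @loc_code L #|F| m k t g grp v) /\
    \dim V = k /\
    min_hamming_distance (@loc_code L #|F| m k t g grp)
      (n - k + 2 - ceil_div k r)%N.
Proof.
move=> _ _ _ k_gt0 r_gt0 _ le_km _ /lin_indep_free g_indep grouping n.
have [d [B blocks]] : exists d B, block_sizes_spec k r grp d B.
  case: grouping => [[_ [t_eq size_r]] |
                    [j [[j_gt0 lt_jr _ k_mod t_eq] [i0 [size_i0 size_r]]]]].
    by exists 0%N, setT; apply: block_sizes_divisible.
  by exists (r - j)%N, [set~ i0]; apply: block_sizes_residue.
exists (code_space k g grp).
split; [|split; first exact: dim_code_space grp g_indep le_km].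
  by move=> v; rewrite loc_codeE; split => /code_spaceP.
rewrite /n ceil_divE //; split.
  have [a [i ai_neq0] hwt_le] := exists_encode_hwt_le g blocks k_gt0 le_km.
  exists (encode g grp a); first by apply/loc_codeE; exists a.
  have hwt_ge := hwt_encode_ge g_indep blocks le_km (ex_intro _ i ai_neq0).
  rewrite eqn_leq hwt_le hwt_ge !andbT.
  by apply: contraNneq ai_neq0 => /(encode_eq0 g_indep le_km)/(_ i) ->.
move=> _ /loc_codeE [a ->] /encode_neq0 a_neq0.
exact: (hwt_encode_ge g_indep blocks le_km a_neq0).
Qed.
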